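(* In the setting of the context, let $\tilde f\in\mathcal L^1_{uni}$. Then the map $(s,\eta)\mapsto\mathbb E^{s,\eta}[\int_s^T\tilde f_rdV_r]$ from $[0,T]\times\Omega$ to $\mathbb R$ is $\mathbb F^o$-progressively measurable.
   Context: Let $E$ be Polish, $\Omega=\mathbb D(\mathbb R_+,E)$, $X_t(\omega)=\omega(t)$, $\mathcal F=\sigma(X_r,r\ge0)$, $\mathcal F^o_t=\sigma(X_r,r\le t)$, $\mathcal F_t=\bigcap_{u>t}\mathcal F^o_u$, $\mathbb F^o=(\mathcal F^o_t)$, $\omega^t=\omega(\cdot\wedge t)$. $(\mathbb P^{s,\eta})_{(s,\eta)\in\mathbb R_+\times\Omega}$ is a family of probabilities on $(\Omega,\mathcal F)$ such that $\mathbb P^{s,\eta}(\omega^s=\eta^s)=1$, $\eta\mapsto\mathbb P^{s,\eta}(F)$ is $\mathcal F^o_s$-measurable, $(t,\omega)\mapsto\mathbb P^{t,\omega}(F)$ is $\mathbb F^o$-progressively measurable, and $\mathbb P^{s,\eta}(F|\mathcal F_t)(\omega)=\mathbb P^{s,\eta}(F|\mathcal F^o_t)(\omega)=\mathbb P^{t,\omega}(F)$ for $\mathbb P^{s,\eta}$-a.a. $\omega$, all $t\ge s$, $F\in\mathcal F$. Fix $T>0$ and $V:[0,T]\to\mathbb R_+$ continuous non-decreasing. $\mathcal L^1_{uni}$ is the set of $\mathbb F^o$-progressively measurable processes $Y$ with $\mathbb E^{s,\eta}[\int_s^T|Y_r|dV_r]<\infty$ for all $(s,\eta)\in[0,T]\times\Omega$.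 *)

From HB Require Import structures.
From mathcomp Require Import all_boot all_order all_algebra.
From mathcomp Require Import all_classical all_reals all_analysis.
Set Implicit Arguments. Unset Strict Implicit. Unset Printing Implicit Defensive.
Import Order.TTheory GRing.Theory Num.Theory numFieldTopology.Exports.
Local Open Scope classical_set_scope.
Local Open Scope ring_scope.

(* E is given with a complete (pseudo)metric; Polish = additionally Hausdorff
   (so the pseudometric is a metric) and separable. *)
Definition polish (R : realType) (E : completePseudoMetricType R) : Prop :=
  hausdorff_space E /\ exists D : set E, countable D /\ closure D = setT.

Definition borel_sets (E : topologicalType) : set (set E) := <<s open >>.

(* A path on R_+ is encoded as a function R -> E which is constant on
   (-oo, 0] (i.e. extended by w(t) = w(0) for t < 0). This is a bijective
   encoding of D(R_+,E). *)
Definition cadlag (R : realType) (E : topologicalType) (w : R -> E) : Prop :=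
  [/\ (forall t, t <= 0 -> w t = w 0),
      (forall t, 0 <= t -> w x @[x --> t^'+] --> w t) &
      (forall t, 0 < t -> exists l : E, w x @[x --> t^'-] --> l)].

Definition skorokhod (R : realType) (E : topologicalType) :=
  {w : R -> E | `[< cadlag w >]}.

Definition X (R : realType) (E : topologicalType) (t : R) (w : skorokhod R E) : E :=
  sval w t.

HB.instance Definition _ (R : realType) (E : topologicalType) :=
  Choice.on (skorokhod R E).

Section pointed_skorokhod.
Variables (R : realType) (E : ptopologicalType).
Lemma cst_cadlag : cadlag (fun _ : R => (point : E)).
Proof.
split=> //.
- by move=> t _; exact: cvg_cst.
- by move=> t _; exists point; exact: cvg_cst.
Qed.
HB.instance Definition _ := isPointed.Build (skorokhod R E)
  (exist _ (fun _ : R => (point : E)) (asboolT cst_cadlag)).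
End pointed_skorokhod.

Definition coord_gen (R : realType) (E : topologicalType) (I : set R)
  : set (set (skorokhod R E)) :=
  [set A | exists r, I r /\ exists B, borel_sets B /\ A = X r @^-1` B].

Definition Omega (R : realType) (E : ptopologicalType) :=
  g_sigma_algebraType (@coord_gen R E [set r | 0 <= r]).

Definition Fo (R : realType) (E : ptopologicalType) (t : R) : set (set (Omega R E)) :=
  <<s @coord_gen R E [set r | 0 <= r <= t] >>.

Definition Fr (R : realType) (E : ptopologicalType) (t : R) : set (set (Omega R E)) :=
  [set A | forall u, t < u -> Fo u A].

Definition measurable_wrt (R : realType) (T : Type) (G : set (set T)) (f : T -> R) :=
  forall B : set R, measurable B -> G (f @^-1` B).

Definition prog_measurable (R : realType) (T : Type) (G : R -> set (set T))
    (I : set R) (Y : R -> T -> R) :=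
  forall t, I t ->
  let D := [set r | 0 <= r <= t] `*` [set: T] in
  let rects := [set Z : set (R * T) | exists A C, [/\ measurable A,
                    A `<=` [set r | 0 <= r <= t], G t C & Z = A `*` C]] in
  forall B : set R, measurable B ->
    <<s D, rects >> (D `&` ((fun p => Y p.1 p.2) @^-1` B)).

Definition cond_prob_version (R : realType) d (T : measurableType d)
    (P : probability T R) (G : set (set T)) (F : set T) (g : T -> R) :=
  measurable_wrt G g /\
  forall A, G A -> P (F `&` A) = (\int[P]_(w in A) (g w)%:E)%E.

Definition dV_integral (R : realType) (V : cumulative R R) (s T : R) (y : R -> R)
  : \bar R :=
  (\int[lebesgue_stieltjes_measure V]_(r in [set r : measurableTypeR R | (s <= r <= T)%R])
     (y r)%:E)%E.

Definition markov_family (R : realType) (E : ptopologicalType)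
    (P : R -> Omega R E -> probability (Omega R E) R) : Prop :=
  [/\
      (forall s eta, 0 <= s ->
         P s eta [set w : Omega R E | forall r, X (Order.min r s) w = X (Order.min r s) eta]
         = 1%E),
      (forall s (F : set (Omega R E)), 0 <= s -> measurable F ->
         measurable_wrt (Fo s) (fun eta => fine (P s eta F))),
      (forall F : set (Omega R E), measurable F ->
         prog_measurable (@Fo R E) [set t | 0 <= t] (fun t w => fine (P t w F))) &
      (forall s eta t (F : set (Omega R E)), 0 <= s <= t -> measurable F ->
         cond_prob_version (P s eta) (Fr t) F (fun w => fine (P t w F)) /\
         cond_prob_version (P s eta) (Fo t) F (fun w => fine (P t w F)))].

Definition L1uni (R : realType) (E : ptopologicalType)
    (P : R -> Omega R E -> probability (Omega R E) R)
    (T : R) (V : cumulative R R) (Y : R -> Omega R E -> R) : Prop :=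
  prog_measurable (@Fo R E) [set t | 0 <= t <= T] Y /\
  forall s eta, 0 <= s <= T ->
    (\int[P s eta]_w dV_integral V s T (fun r => `|Y r w|%R) < +oo)%E.

From HB Require Import structures.
From mathcomp Require Import all_boot all_order all_algebra.
From mathcomp Require Import all_classical all_reals all_analysis.
From mathcomp Require Import measurable_realfun.
Import Order.TTheory GRing.Theory Num.Theory numFieldTopology.Exports.
Local Open Scope classical_set_scope.
Local Open Scope ring_scope.

(* Fix t <= T. Progressive measurability at time t is measurability for a
   sigma-algebra on R * Omega, for which (s, eta) |-> P^{s,eta} is a probability
   kernel because each (s, eta) |-> P^{s,eta}(F) is progressive. Cut f off
   outside [0,T] * Omega and split it into its positive and negative parts: by
   Tonelli each ((s, eta), w) |-> int_s^T f^+-_r(w) dV_r is measurable, hence so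
   is its integral against the kernel. As f is in L^1_uni both integrals are
   finite and their difference is the expectation. *)

Section progressive_sigma_algebra.
Context {R : realType} {d : measure_display} {Ω : measurableType d}.
Variable G : R -> set (set Ω).

Definition prog_domain (t : R) : set (R * Ω) := [set r | 0 <= r <= t] `*` [set: Ω].

Definition prog_rectangles (t : R) : set (set (R * Ω)) :=
  [set Z | exists A C, [/\ measurable A,
     A `<=` [set r | 0 <= r <= t], G t C & Z = A `*` C]].

(* The sets whose trace on [0,t] * Omega is progressive: unlike the trace
   sigma-algebra it lives on the whole of R * Omega, so it yields a
   measurableType whose measurable functions are the progressive ones. *)
Definition prog_trace (t : R) : set (set (R * Ω)) :=
  [set A | <<s prog_domain t, prog_rectangles t >> (prog_domain t `&` A)].

Lemma prog_trace_sigma_algebra t : sigma_algebra setT (prog_trace t).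
Proof.
split.
- by rewrite /prog_trace /= setI0; exact: sigma_algebra0.
- move=> A; rewrite /prog_trace /= setTD -setDE => DA.
  have -> : prog_domain t `\` A = prog_domain t `\` (prog_domain t `&` A).
    by rewrite setDIr setDv set0U.
  exact: sigma_algebraCD.
- by move=> F DF; rewrite /prog_trace /= setI_bigcupr; exact: sigma_algebra_bigcup.
Qed.

Definition progType (t : R) := g_sigma_algebraType (prog_trace t).

Lemma measurable_progTypeE t : @measurable _ (progType t) = prog_trace t.
Proof. exact: sigma_algebra_id (prog_trace_sigma_algebra t). Qed.

Lemma prog_measurableP (I : set R) (Y : R -> Ω -> R) :
  prog_measurable G I Y <->
  forall t, I t -> measurable_fun [set: progType t] (fun x => Y x.1 x.2).
Proof.
split=> [Yprog t It _ B mB | Ymeas t It /= B mB].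
  by rewrite measurable_progTypeE /prog_trace setTI; exact: Yprog.
by have := Ymeas t It measurableT B mB; rewrite measurable_progTypeE /prog_trace setTI.
Qed.

Lemma eq_measurable_prog t (Y Z : progType t -> R) :
  (forall x, prog_domain t x -> Y x = Z x) ->
  measurable_fun setT Y -> measurable_fun setT Z.
Proof.
move=> YZ mY _ B mB; rewrite measurable_progTypeE /prog_trace /= setTI.
suff -> : prog_domain t `&` Z @^-1` B = prog_domain t `&` Y @^-1` B.
  by have := mY measurableT B mB; rewrite measurable_progTypeE /prog_trace /= setTI.
apply/seteqP; split=> x [Dx Bx]; split=> //=.
  by rewrite YZ.
by rewrite -YZ.
Qed.

Hypothesis G_sigma : forall t, sigma_algebra setT (G t).
Hypothesis G_sub : forall t, G t `<=` measurable.

Lemma measurable_prog_domain t : measurable (prog_domain t).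
Proof. by apply: measurableX => //; rewrite -set_itvcc; exact: measurable_itv. Qed.

Lemma prog_sigma_sub t : <<s prog_domain t, prog_rectangles t >> `<=` measurable.
Proof.
apply: smallest_sub.
  split=> [|A mA|F mF]; first exact: measurable0.
    by apply: measurableD => //; exact: measurable_prog_domain.
  exact: bigcupT_measurable.
by move=> _ [A [C [mA _ GC ->]]]; apply: measurableX => //; exact: G_sub GC.
Qed.

Lemma measurable_fun_prog_domain t (Y : R * Ω -> R) :
  measurable_fun [set: progType t] (Y : progType t -> R) ->
  measurable_fun (prog_domain t) Y.
Proof.
move=> mY _ B mB; apply: (prog_sigma_sub t).
by have := mY measurableT B mB; rewrite measurable_progTypeE /prog_trace /= setTI.
Qed.

Lemma measurable_prog_patch {I : set R} {Y : R -> Ω -> R} {t} :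
  prog_measurable G I Y -> I t ->
  measurable_fun setT ((fun x => Y x.1 x.2) \_ (prog_domain t)).
Proof.
move=> Yprog It; apply/(measurable_restrictT _ (measurable_prog_domain t)).
apply: measurable_fun_prog_domain; exact: (prog_measurableP _ _).1 Yprog t It.
Qed.

Lemma measurable_prog_fst t : measurable_fun [set: progType t] (fun x => x.1 : R).
Proof.
move=> _ B mB; rewrite measurable_progTypeE /prog_trace /= setTI.
apply: sub_sigma_algebra; exists ([set r | 0 <= r <= t] `&` B), setT; split.
- by apply: measurableI => //; rewrite -set_itvcc; exact: measurable_itv.
- by move=> r [].
- by have [G0 GC _] := G_sigma t; rewrite -setC0 -setTD; exact: GC G0.
- by apply/seteqP; split=> [[r w]|[r w]] /= [[rt Br] ?].
Qed.

End progressive_sigma_algebra.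

Lemma Fo_sigma_algebra (R : realType) (E : ptopologicalType) t :
  sigma_algebra setT (@Fo R E t).
Proof. exact: smallest_sigma_algebra. Qed.

Lemma Fo_sub_measurable (R : realType) (E : ptopologicalType) t :
  @Fo R E t `<=` measurable.
Proof. by apply: sub_sigma_algebra2 => A [r [/andP[r0 _] rA]]; exists r. Qed.

Lemma fine_integralB_ge0 d (T : measurableType d) (R : realType)
    (nu : {measure set T -> \bar R}) (h1 h2 : T -> \bar R) :
  measurable_fun setT h1 -> measurable_fun setT h2 ->
  (forall x, 0 <= h1 x)%E -> (forall x, 0 <= h2 x)%E ->
  (\int[nu]_x (h1 x + h2 x) < +oo)%E ->
  fine (\int[nu]_x (h1 x - h2 x))%E =
  fine (\int[nu]_x h1 x)%E - fine (\int[nu]_x h2 x)%E.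
Proof.
move=> mh1 mh2 h10 h20 fin12.
have integrable_le h : measurable_fun setT h -> (forall x, 0 <= h x)%E ->
    (forall x, h x <= h1 x + h2 x)%E -> nu.-integrable setT h.
  move=> mh h0 hle; apply/integrableP; split => //; apply: le_lt_trans fin12.
  have mabs : measurable_fun setT (fun x => `|h x|%E) by exact: measurableT_comp.
  apply: (ge0_le_integral nu measurableT (fun x _ => abse_ge0 (h x)) mabs
    (emeasurable_funD mh1 mh2)) => x _.
  by rewrite gee0_abs.
have int1 := integrable_le h1 mh1 h10 (fun x => leeDl _ (h20 x)).
have int2 := integrable_le h2 mh2 h20 (fun x => leeDr _ (h10 x)).
by rewrite (integralB measurableT int1 int2) fineB //; exact: integrable_fin_num.
Qed.

Section tail_integral.
Context {R : realType} {d d' : measure_display}.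
Context {X : measurableType d} {Ω : measurableType d'}.
Variables (mu : {sigma_finite_measure set measurableTypeR R -> \bar R}).
Variables (start : X -> R) (u : R).

Definition tail_integral (h : R * Ω -> R) (p : X * Ω) : \bar R :=
  (\int[mu]_(r in [set r : measurableTypeR R | (start p.1 <= r <= u)%R])
     (h (r, p.2))%:E)%E.

Lemma tail_integral_ge0 h p : (forall z, 0 <= h z) -> (0 <= tail_integral h p)%E.
Proof. by move=> h0; apply: integral_ge0 => r _; rewrite lee_fin. Qed.

Lemma tail_integralE h p :
  tail_integral h p = (tail_integral (h^\+)%R p - tail_integral (h^\-)%R p)%E.
Proof.
rewrite /tail_integral integralE.
by congr (_ - _)%E; apply: eq_integral => r _; rewrite (funeposE, funenegE) -EFin_max.
Qed.

Lemma tail_integral_norm (h : R * Ω -> R) p : measurable_fun setT h ->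
  tail_integral (Num.norm \o h) p =
  (tail_integral (h^\+)%R p + tail_integral (h^\-)%R p)%E.
Proof.
move=> mh; have mhp : measurable_fun setT (fun r : measurableTypeR R => h (r, p.2)).
  by apply: measurableT_comp mh _; exact: measurable_fun_pair.
rewrite /tail_integral -ge0_integralD //.
- by apply: eq_integral => r _; rewrite -EFinD -funrposDneg.
- by rewrite -set_itvcc; exact: measurable_itv.
- by move=> r _; rewrite lee_fin funrpos_ge0.
- by apply/measurable_EFinP; apply: measurable_funS (measurable_funrpos mhp).
- by move=> r _; rewrite lee_fin funrneg_ge0.
- by apply/measurable_EFinP; apply: measurable_funS (measurable_funrneg mhp).
Qed.

Hypothesis mstart : measurable_fun setT start.

Lemma measurable_tail_integral (h : R * Ω -> R) :
  measurable_fun setT h -> (forall z, 0 <= h z) ->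
  measurable_fun setT (tail_integral h).
Proof.
move=> mh h0.
pose H (z : (X * Ω) * measurableTypeR R) : \bar R :=
  if start z.1.1 <= z.2 <= u then (h (z.2, z.1.2))%:E else 0%E.
have -> : tail_integral h = fubini_F mu H.
  apply/funext => p; rewrite /tail_integral integral_mkcond.
  by apply: eq_integral => r _; rewrite /patch [_ \in _]asboolb.
apply: measurable_fun_fubini_tonelli_F; last first.
  by move=> z; rewrite /H; case: ifP; rewrite ?lee_fin.
have mtime : measurable_fun [set: (X * Ω) * measurableTypeR R] (fun z => z.2 : R).
  apply: (measurableT_comp (f := fun r : measurableTypeR R => r : R)) measurable_snd.
  by move=> _ B mB; rewrite setTI. (* measurableTypeR R and R carry the same sigma-algebra *)
apply: measurable_fun_ifT.
- apply: measurable_and; apply: measurable_fun_ler => //.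
  exact: measurableT_comp mstart (measurableT_comp measurable_fst measurable_fst).
- apply/measurable_EFinP; apply: measurableT_comp mh _.
  exact: measurable_fun_pair (measurableT_comp measurable_snd measurable_fst).
- exact: measurable_cst.
Qed.

Lemma fine_integral_tail (nu : {measure set Ω -> \bar R}) (h : R * Ω -> R) x :
  measurable_fun setT h ->
  (\int[nu]_w tail_integral (Num.norm \o h) (x, w) < +oo)%E ->
  fine (\int[nu]_w tail_integral h (x, w))%E =
  fine (\int[nu]_w tail_integral (h^\+)%R (x, w))%E -
  fine (\int[nu]_w tail_integral (h^\-)%R (x, w))%E.
Proof.
move=> mh fin; under eq_integral do rewrite tail_integralE.
apply: fine_integralB_ge0.
- apply: measurable_fun_pair2; apply: measurable_tail_integral (measurable_funrpos mh) _.
  exact: funrpos_ge0.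
- apply: measurable_fun_pair2; apply: measurable_tail_integral (measurable_funrneg mh) _.
  exact: funrneg_ge0.
- by move=> w; apply: tail_integral_ge0 => z; exact: funrpos_ge0.
- by move=> w; apply: tail_integral_ge0 => z; exact: funrneg_ge0.
- by under eq_integral do rewrite -tail_integral_norm //.
Qed.

End tail_integral.

Section progressive_kernel.
Context {R : realType} {d : measure_display} {Ω : measurableType d}.
Variables (G : R -> set (set Ω)) (P : R -> Ω -> probability Ω R) (t : R).
Hypothesis G_sigma : forall t, sigma_algebra setT (G t).
Hypothesis P_prog : forall F, measurable F ->
  prog_measurable G [set t | 0 <= t] (fun t w => fine (P t w F)).
Hypothesis t_ge0 : 0 <= t.

Lemma measurable_prog_probability :
  measurable_fun [set: progType G t] (fun x => P x.1 x.2 : pprobability Ω R).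
Proof.
apply: (measurability (@pset _ _ _ : set (set (pprobability Ω R)))) => //.
move=> _ [_ [r r01] [F mF <-]] <-; apply: emeasurable_fun_infty_o => //.
have -> : (fun x : progType G t => P x.1 x.2 F) = (fun x => (fine (P x.1 x.2 F))%:E).
  apply/funext => x; rewrite fineK // ge0_fin_numE //.
  by rewrite (le_lt_trans (probability_le1 _ mF)) ?ltry.
by apply/measurable_EFinP; exact: (prog_measurableP _ _ _).1 (P_prog _ mF) t t_ge0.
Qed.

Lemma measurable_prog_integral (k : progType G t * Ω -> \bar R) :
  (forall z, 0 <= k z)%E -> measurable_fun setT k ->
  measurable_fun [set: progType G t] (fun x => \int[P x.1 x.2]_w k (x, w))%E.
Proof.
exact: measurable_fun_integral_finite_kernel (kprobability measurable_prog_probability).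
Qed.

Lemma measurable_prog_tail_integral mu u (h : R * Ω -> R) :
  measurable_fun setT h -> (forall z, 0 <= h z) ->
  measurable_fun [set: progType G t]
    (fun x => \int[P x.1 x.2]_w tail_integral mu fst u h (x, w))%E.
Proof.
move=> mh h0; apply: measurable_prog_integral => [z|].
  exact: tail_integral_ge0.
exact: measurable_tail_integral _ _ _ (measurable_prog_fst _ G_sigma t) _ mh h0.
Qed.

End progressive_kernel.

Theorem lemmaA1 (R : realType) (E : completePseudoMetricType R)
  (hE : polish E)
  (P : R -> Omega R E -> probability (Omega R E) R)
  (hP : markov_family P)
  (T : R) (hT : 0 < T)
  (V : cumulative R R) (hVc : continuous V)
  (hV0 : forall r, 0 <= r <= T -> 0 <= V r)
  (f : R -> Omega R E -> R) (hf : L1uni P T V f) :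
  prog_measurable (@Fo R E) [set t | 0 <= t <= T]
    (fun s eta => fine (\int[P s eta]_w dV_integral V s T (fun r => f r w))%E).
Proof.
case: hP => _ _ P_prog _; case: hf => f_prog f_int.
have T_in : [set t | 0 <= t <= T] T by rewrite /= lexx (ltW hT).
(* f itself need not be measurable on R * Omega, only on [0,T] * Omega. *)
pose g := (fun p : R * Omega R E => f p.1 p.2) \_ (prog_domain T).
have mg : measurable_fun setT g :=
  measurable_prog_patch _ (@Fo_sub_measurable R E) f_prog T_in.
pose mu := lebesgue_stieltjes_measure V.
apply/prog_measurableP => t /andP[t0 tT].
have dV_g (F : R -> R) (x : progType (@Fo R E) t) w : 0 <= x.1 ->
    dV_integral V x.1 T (fun r => F (f r w)) = tail_integral mu fst T (F \o g) (x, w).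
  move=> x0; apply: eq_integral => r /set_mem /andP[xr rT] /=.
  by rewrite /g patchT //; apply/mem_set; split=> //=; rewrite (le_trans x0 xr).
pose I h (x : progType (@Fo R E) t) :=
  fine (\int[P x.1 x.2]_w tail_integral mu fst T h (x, w))%E.
have mI (h : R * Omega R E -> R) :
    measurable_fun setT h -> (forall z, 0 <= h z) -> measurable_fun setT (I h).
  move=> mh h0; apply: measurableT_comp (fine_measurable _) _ => //.
  exact: measurable_prog_tail_integral _ _ _ (@Fo_sigma_algebra R E) P_prog t0 _ _ _ mh h0.
apply: (eq_measurable_prog _ t (fun x => I g^\+ x - I g^\- x)); last first.
  apply: measurable_funB; apply: mI.
  - exact: measurable_funrpos.
  - exact: funrpos_ge0.
  - exact: measurable_funrneg.
  - exact: funrneg_ge0.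
move=> x [/andP[x0 xt] _]; rewrite /I -fine_integral_tail //.
  by congr fine; apply: eq_integral => w _; rewrite (dV_g id).
under eq_integral => w _ do rewrite -(dV_g Num.norm x w x0).
by apply: f_int; rewrite x0 (le_trans xt tT).
Qed.
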